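(* Let $H_1,H_2$ be linear subspaces of $\mathbb{R}^n$. The primitive quartics $h_{4,H_1}$ and $h_{4,H_2}$ are congruent if and only if either $\dim H_1=\dim H_2$ or $\dim H_1=n-\dim H_2$.
   Context: $\mathbb{R}^n$ carries the standard Euclidean inner product and norm $|\cdot|$. For a linear subspace $H\subseteq\mathbb{R}^n$, write $\xi,\eta$ for the orthogonal projections of $x$ onto $H$ and $H^\perp$, and set $h_{4,H}(x)=|\xi|^4-6|\xi|^2|\eta|^2+|\eta|^4$. Two polynomials $f_1,f_2$ on $\mathbb{R}^n$ are congruent if there is an orthogonal transformation $U\in O(n)$ and $\epsilon\in\{1,-1\}$ with $f_2(x)=\epsilon f_1(Ux)$ for all $x$. *)

From mathcomp Require Import all_boot all_order all_algebra.
From mathcomp Require Import reals.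
Set Implicit Arguments. Unset Strict Implicit. Unset Printing Implicit Defensive.
Import Order.TTheory GRing.Theory Num.Theory.
Local Open Scope ring_scope.

(* Points of R^n are row vectors 'rV[R]_n; a linear subspace H of R^n is
   represented by a square matrix whose row space is H (mxalgebra);
   its dimension is \rank H. *)

Definition sqnorm (R : realType) (n : nat) (x : 'rV[R]_n) : R :=
  \sum_(i < n) x 0 i ^+ 2.

Definition ortho_compl (R : realType) (n : nat) (H : 'M[R]_n) : 'M[R]_n :=
  kermx H^T.

Definition oproj (R : realType) (n : nat) (H : 'M[R]_n) (x : 'rV[R]_n) : 'rV[R]_n :=
  x *m proj_mx H (ortho_compl H).

Definition h4 (R : realType) (n : nat) (H : 'M[R]_n) (x : 'rV[R]_n) : R :=
  let a := sqnorm (oproj H x) in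
  let b := sqnorm (oproj (ortho_compl H) x) in
  a ^+ 2 - 6 * a * b + b ^+ 2.

Definition orthogonal_mx (R : realType) (n : nat) (U : 'M[R]_n) : Prop :=
  U *m U^T = 1%:M.

Definition congruent (R : realType) (n : nat) (f1 f2 : 'rV[R]_n -> R) : Prop :=
  exists (U : 'M[R]_n) (eps : R),
    orthogonal_mx U /\ (eps = 1 \/ eps = -1) /\
    forall x : 'rV[R]_n, f2 x = eps * f1 (x *m U).

(* Write h_{4,H}(x) = q(|xi|^2, |eta|^2) with q(a, b) = a^2 - 6ab + b^2 = (a + b)^2 - 8ab.
   Since |x|^2 = |xi|^2 + |eta|^2, we get h_{4,H}(x) = |x|^4 exactly on H \cup H^perp,
   and h_{4,H}(x) = -|x|^4 nowhere on H \cup H^perp except at 0; moreover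
   h_{4,H} = h_{4,H^perp}.  If h_{4,H_2}(x) = eps h_{4,H_1}(xU), then U maps H_2 into
   H_1 \cup H_1^perp, hence into H_1 or into H_1^perp (eps = 1), or maps H_2 onto a
   subspace meeting H_1^perp trivially (eps = -1); either way
   dim H_2 <= max(dim H_1, n - dim H_1).  Applying this to H_2^perp and with the roles
   exchanged shows {dim H_1, n - dim H_1} = {dim H_2, n - dim H_2}.  Conversely, if
   dim H_1 = dim H_2, the orthogonal map sending an orthonormal basis of H_2 and H_2^perp
   to one of H_1 and H_1^perp transports h_{4,H_2} to h_{4,H_1}. *)

From mathcomp Require Import all_boot all_order all_algebra.
From mathcomp Require Import reals.
From mathcomp Require Import ring zify.
Set Implicit Arguments. Unset Strict Implicit. Unset Printing Implicit Defensive.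
Import Order.TTheory GRing.Theory Num.Theory.
Local Open Scope ring_scope.

Section FieldOrthogonality.
Variable F : fieldType.

Lemma mulmx_tr_eq0C m n p (A : 'M[F]_(m, n)) (B : 'M[F]_(p, n)) :
  A *m B^T = 0 -> B *m A^T = 0.
Proof. by move=> AB0; rewrite -[B *m _]trmxK trmx_mul trmxK AB0 trmx0. Qed.

Lemma mul_sub_kermx_tr m n p q (H : 'M[F]_(q, n)) (A : 'M[F]_(m, n)) (B : 'M[F]_(p, n)) :
  (A <= H)%MS -> (B <= kermx H^T)%MS -> A *m B^T = 0.
Proof.
move=> /submxP[D ->] /sub_kermxP BH0.
by rewrite -mulmxA (mulmx_tr_eq0C BH0) mulmx0.
Qed.

Lemma sub_kermx_trK m n q (H : 'M[F]_(q, n)) (A : 'M[F]_(m, n)) :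
  (A <= H)%MS -> (A <= kermx (kermx H^T)^T)%MS.
Proof.
move=> /submxP[D ->]; apply/sub_kermxP.
by rewrite -mulmxA (mulmx_tr_eq0C (mulmx_ker _)) mulmx0.
Qed.

Lemma mxrank_kermx_tr n q (H : 'M[F]_(q, n)) : \rank (kermx H^T) = (n - \rank H)%N.
Proof. by rewrite mxrank_ker mxrank_tr. Qed.

Lemma mxrank_disjoint_le n p q (A : 'M[F]_(p, n)) (B : 'M[F]_(q, n)) :
  (forall y : 'rV_n, (y <= A)%MS -> (y <= B)%MS -> y = 0) ->
  (\rank A + \rank B <= n)%N.
Proof.
move=> AB0; have capAB0 : (A :&: B)%MS = 0.
  apply/row_matrixP => i; rewrite row0; apply: AB0.
    exact: submx_trans (row_sub i _) (capmxSl _ _).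
  exact: submx_trans (row_sub i _) (capmxSr _ _).
by rewrite -mxrank_sum_cap capAB0 mxrank0 addn0 rank_leq_col.
Qed.

Lemma sub_union_submx m n p q (W : 'M[F]_(m, n)) (A : 'M[F]_(p, n)) (B : 'M[F]_(q, n)) :
  (forall y : 'rV_n, (y <= W)%MS -> (y <= A)%MS \/ (y <= B)%MS) ->
  (W <= A)%MS \/ (W <= B)%MS.
Proof.
move=> WAB; have [WA|/row_subPn[i WiA]] := boolP (W <= A)%MS; first by left.
have [WB|/row_subPn[j WjB]] := boolP (W <= B)%MS; first by right.
have WiB : (row i W <= B)%MS by case: (WAB _ (row_sub i W)) => // WiA'; rewrite WiA' in WiA.
have WjA : (row j W <= A)%MS by case: (WAB _ (row_sub j W)) => // WjB'; rewrite WjB' in WjB.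
(* row i W + row j W lies in W, but in neither A nor B *)
have := WAB _ (addmx_sub (row_sub i W) (row_sub j W)).
case=> Wij; [move: WiA | move: WjB] => /negP[].
  by rewrite -(addrK (row j W) (row i W)) addmx_sub ?eqmx_opp.
by rewrite -(addKr (row i W) (row j W)) addmx_sub ?eqmx_opp // addrC.
Qed.

Lemma orthonormal_mulmx_trK m n (Q : 'M[F]_(m, n)) :
  Q *m Q^T = 1%:M -> row_full Q -> Q^T *m Q = 1%:M.
Proof.
move=> QQT1 /row_fullP[D DQ1].
by rewrite -[Q^T]mul1mx -{1}DQ1 -!mulmxA (mulmxA Q) QQT1 mul1mx.
Qed.

Lemma orthonormal_col_mx m1 m2 n (Q1 : 'M[F]_(m1, n)) (Q2 : 'M[F]_(m2, n)) :
  Q1 *m Q1^T = 1%:M -> Q2 *m Q2^T = 1%:M -> Q1 *m Q2^T = 0 ->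
  col_mx Q1 Q2 *m (col_mx Q1 Q2)^T = 1%:M.
Proof.
move=> Q11 Q22 Q12; rewrite tr_col_mx mul_col_row Q11 Q22 Q12 mulmx_tr_eq0C //.
by rewrite [RHS](scalar_mx_block m1 m2).
Qed.

Lemma mxrank_orthonormal m n (Q : 'M[F]_(m, n)) : Q *m Q^T = 1%:M -> \rank Q = m.
Proof.
move=> QQT1; apply/eqP; rewrite eqn_leq rank_leq_row /=.
by rewrite -{1}(mxrank1 F m) -QQT1 mxrankM_maxl.
Qed.

Lemma orthonormal_eqmx m n p (Q : 'M[F]_(m, n)) (H : 'M[F]_(p, n)) :
  Q *m Q^T = 1%:M -> (Q <= H)%MS -> \rank H = m -> (Q == H)%MS.
Proof. by move=> QQT1 QH rankH; rewrite -(mxrank_leqif_eq QH).2 rankH mxrank_orthonormal. Qed.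

End FieldOrthogonality.

Section RealOrthogonality.
Variable R : realFieldType.

Lemma mulmx_trmx_diag_ge0 m n (A : 'M[R]_(m, n)) i : 0 <= (A *m A^T) i i.
Proof. by rewrite mxE; apply: sumr_ge0 => k _; rewrite mxE -expr2 sqr_ge0. Qed.

Lemma mulmx_trmx_eq0 m n (A : 'M[R]_(m, n)) : A *m A^T = 0 -> A = 0.
Proof.
move=> AAT0; apply/matrixP => i j; rewrite mxE.
have := congr1 (fun M : 'M[R]_m => M i i) AAT0; rewrite !mxE => sum0.
have sq_ge0 k : predT k -> 0 <= A i k * A^T k i by rewrite mxE -expr2 sqr_ge0.
have := psumr_eq0P sq_ge0 sum0 isT (i := j).
by rewrite mxE -expr2 => /eqP; rewrite sqrf_eq0 => /eqP.
Qed.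

Lemma capmx_kermx_tr n q (H : 'M[R]_(q, n)) : (H :&: kermx H^T)%MS = 0.
Proof. by apply: mulmx_trmx_eq0; apply: mul_sub_kermx_tr (capmxSl _ _) (capmxSr _ _). Qed.

Lemma row_full_addsmx_kermx_tr n q (H : 'M[R]_(q, n)) : row_full (H + kermx H^T)%MS.
Proof.
apply/eqP; rewrite -[LHS]addn0 -(mxrank0 R n n) -(capmx_kermx_tr H) mxrank_sum_cap.
by rewrite mxrank_kermx_tr subnKC // rank_leq_col.
Qed.

End RealOrthogonality.

Section OrthonormalBasis.
Variable R : rcfType.

Lemma normalize_rV n (v : 'rV[R]_n) :
  v != 0 -> exists2 q : 'rV[R]_n, q *m q^T = 1%:M & (q == v)%MS.
Proof.
move=> v_neq0; set s := (v *m v^T) 0 0.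
have s_gt0 : 0 < s.
  rewrite lt_def mulmx_trmx_diag_ge0 andbT; apply: contra v_neq0 => /eqP s0.
  suff -> : v = 0 by [].
  by apply: mulmx_trmx_eq0; apply/matrixP => i j; rewrite !ord1 -/s s0 mxE.
exists ((Num.sqrt s)^-1 *: v); last first.
  by apply/eqmxP/eqmx_scale; rewrite invr_eq0 sqrtr_eq0 -ltNge.
rewrite linearZ /= -scalemxAl -scalemxAr scalerA [v *m _]mx11_scalar -/s.
by rewrite scale_scalar_mx -expr2 exprVn sqr_sqrtr ?ltW // mulVf // gt_eqF.
Qed.

Lemma orthonormal_basis_of_rank k n :
  forall m (H : 'M[R]_(m, n)), \rank H = k ->
  exists Q : 'M[R]_(k, n), Q *m Q^T = 1%:M /\ (Q == H)%MS.
Proof.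
elim: k => [|k IHk] m H rankH.
  have QQT1 : (0 : 'M[R]_(0, n)) *m 0^T = 1%:M by apply/matrixP => [[]].
  by exists 0; split; last exact: orthonormal_eqmx QQT1 (sub0mx _ _) rankH.
have /row_subPn[i] : ~~ (H <= (0 : 'M_n))%MS by rewrite submx0 -mxrank_eq0 rankH.
rewrite submx0 => Hi_neq0.
have [q qqT1 eq_qHi] := normalize_rV Hi_neq0.
have qH : (q <= H)%MS by rewrite (eqmxP eq_qHi) row_sub.
set K := (H :&: kermx q^T)%MS.
have rankK : \rank K = k.
  have /eqP fullHK : row_full (H + kermx q^T)%MS.
    rewrite -sub1mx; apply: submx_trans (addsmxS qH (submx_refl _)).
    by rewrite sub1mx row_full_addsmx_kermx_tr.
  have := mxrank_sum_cap H (kermx q^T).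
  rewrite fullHK mxrank_kermx_tr (mxrank_orthonormal qqT1) rankH -/K.
  have := rank_leq_col H; rewrite rankH; lia.
have [Q' [Q'Q'T1 eq_Q'K]] := IHk _ K rankK.
have Q'q : (Q' <= kermx q^T)%MS by rewrite (eqmxP eq_Q'K) capmxSr.
have QQT1 : col_mx q Q' *m (col_mx q Q')^T = 1%:M.
  exact: orthonormal_col_mx qqT1 Q'Q'T1 (mul_sub_kermx_tr (submx_refl q) Q'q).
have QH : (col_mx q Q' <= H)%MS by rewrite col_mx_sub qH (eqmxP eq_Q'K) capmxSl.
by exists (col_mx q Q'); split; last exact: orthonormal_eqmx QQT1 QH rankH.
Qed.

End OrthonormalBasis.

Section Quartic.
Variable R : realType.

Lemma mxrank_ortho_compl n (H : 'M[R]_n) : \rank (ortho_compl H) = (n - \rank H)%N.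
Proof. exact: mxrank_kermx_tr. Qed.

Lemma sqnormE n (x : 'rV[R]_n) : sqnorm x = (x *m x^T) 0 0.
Proof. by rewrite /sqnorm mxE; apply: eq_bigr => i _; rewrite mxE expr2. Qed.

Lemma sqnorm_eq0 n (x : 'rV[R]_n) : (sqnorm x == 0) = (x == 0).
Proof.
apply/eqP/eqP => [x0|->]; last by rewrite sqnormE mul0mx mxE.
by apply: mulmx_trmx_eq0; apply/matrixP => i j; rewrite !ord1 -sqnormE x0 mxE.
Qed.

Lemma sqnormD_ortho n (u v : 'rV[R]_n) :
  u *m v^T = 0 -> sqnorm (u + v) = sqnorm u + sqnorm v.
Proof.
move=> uv0; rewrite !sqnormE linearD /= !mulmxDl !mulmxDr uv0 (mulmx_tr_eq0C uv0).
by rewrite addr0 add0r mxE.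
Qed.

Lemma sqnorm_mul_orthogonal n (U : 'M[R]_n) (x : 'rV[R]_n) :
  orthogonal_mx U -> sqnorm (x *m U) = sqnorm x.
Proof. by move=> UUT1; rewrite !sqnormE trmx_mul mulmxA -(mulmxA x) UUT1 mulmx1. Qed.

Lemma oproj_sum n (H : 'M[R]_n) (u v : 'rV[R]_n) :
  (u <= H)%MS -> (v <= ortho_compl H)%MS -> oproj H (u + v) = u.
Proof.
move=> uH vH'; rewrite /oproj mulmxDl proj_mx_id ?proj_mx_0 ?addr0 //;
  exact: capmx_kermx_tr.
Qed.

Lemma ortho_decomp n (H : 'M[R]_n) (x : 'rV[R]_n) :
  exists u v, [/\ (u <= H)%MS, (v <= ortho_compl H)%MS & x = u + v].
Proof.
exists (oproj H x), (x - oproj H x); split; first exact: proj_mx_sub.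
  by apply/proj_mx_compl_sub/submx_full/row_full_addsmx_kermx_tr.
by rewrite addrC subrK.
Qed.

Definition quartic (a b : R) := a ^+ 2 - 6 * a * b + b ^+ 2.

Lemma h4_sum n (H : 'M[R]_n) (u v : 'rV[R]_n) :
  (u <= H)%MS -> (v <= ortho_compl H)%MS ->
  h4 H (u + v) = quartic (sqnorm u) (sqnorm v).
Proof.
move=> uH vH'; rewrite /h4 (oproj_sum uH vH') [u + v]addrC oproj_sum //.
exact: (sub_kermx_trK uH).
Qed.

Lemma h4_ortho_compl n (H : 'M[R]_n) (x : 'rV[R]_n) : h4 (ortho_compl H) x = h4 H x.
Proof.
have [u [v [uH vH' ->]]] := ortho_decomp H x.
rewrite addrC h4_sum ?(sub_kermx_trK uH) // addrC h4_sum // /quartic; ring.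
Qed.

Lemma h4_sub n (H : 'M[R]_n) (x : 'rV[R]_n) : (x <= H)%MS -> h4 H x = sqnorm x ^+ 2.
Proof.
move=> xH; rewrite -[x]addr0 h4_sum ?sub0mx // /quartic.
have /eqP -> : sqnorm (0 : 'rV[R]_n) == 0 by rewrite sqnorm_eq0.
by rewrite addr0; ring.
Qed.

Lemma h4_sub_ortho_compl n (H : 'M[R]_n) (x : 'rV[R]_n) :
  (x <= ortho_compl H)%MS -> h4 H x = sqnorm x ^+ 2.
Proof. by move=> xH'; rewrite -h4_ortho_compl h4_sub. Qed.

Lemma h4_eq_sqnorm2P n (H : 'M[R]_n) (x : 'rV[R]_n) :
  h4 H x = sqnorm x ^+ 2 <-> (x <= H)%MS \/ (x <= ortho_compl H)%MS.
Proof.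
split; last by case; [apply: h4_sub | apply: h4_sub_ortho_compl].
have [u [v [uH vH' ->]]] := ortho_decomp H x.
rewrite h4_sum // sqnormD_ortho; last exact: mul_sub_kermx_tr uH vH'.
set a := sqnorm u; set b := sqnorm v => e.
have /eqP : 8 * (a * b) = 0.
  by rewrite -[RHS]oppr0 -(subrr (quartic a b)) {2}e /quartic; ring.
rewrite mulf_eq0 pnatr_eq0 mulf_eq0 !sqnorm_eq0 /= => /orP[] /eqP->.
  by right; rewrite add0r.
by left; rewrite addr0.
Qed.

Lemma h4_eq_opp_sqnorm2 n (H : 'M[R]_n) (x : 'rV[R]_n) :
  (x <= H)%MS \/ (x <= ortho_compl H)%MS -> h4 H x = - sqnorm x ^+ 2 -> x = 0.
Proof.
move=> /h4_eq_sqnorm2P -> /eqP; rewrite -subr_eq0 opprK -mulr2n mulrn_eq0 /=.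
by rewrite expf_eq0 /= sqnorm_eq0 => /eqP.
Qed.

End Quartic.

Section OrthogonalMatrices.
Variables (R : realType) (n : nat).
Implicit Types (U : 'M[R]_n) (H : 'M[R]_n).

Lemma orthogonal_mx_tr U : orthogonal_mx U -> orthogonal_mx U^T.
Proof. by rewrite /orthogonal_mx trmxK; apply: mulmx1C. Qed.

Lemma mulmx_orthogonalK U (x : 'rV[R]_n) : orthogonal_mx U -> x *m U^T *m U = x.
Proof. by move=> UUT1; rewrite -mulmxA (mulmx1C UUT1) mulmx1. Qed.

Lemma mxrank_mul_orthogonal m (A : 'M[R]_(m, n)) U :
  orthogonal_mx U -> \rank (A *m U) = \rank A.
Proof. by move=> UUT1; rewrite mxrankMfree // row_free_unit; case: (mulmx1_unit UUT1). Qed.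

Lemma h4_mul_orthogonal H1 H2 U (x : 'rV[R]_n) : orthogonal_mx U ->
  (H2 *m U <= H1)%MS -> (ortho_compl H2 *m U <= ortho_compl H1)%MS ->
  h4 H2 x = h4 H1 (x *m U).
Proof.
move=> UUT1 H2U H2'U; have [u [v [uH vH' ->]]] := ortho_decomp H2 x.
have uUH1 := submx_trans (submxMr U uH) H2U.
have vUH1' := submx_trans (submxMr U vH') H2'U.
by rewrite mulmxDl !h4_sum ?sqnorm_mul_orthogonal.
Qed.

Lemma orthonormal_adapted_basis k H : \rank H = k ->
  exists (Q : 'M[R]_(k, n)) (P : 'M[R]_(n - k, n)),
    [/\ col_mx Q P *m (col_mx Q P)^T = 1%:M, (Q :=: H)%MS & (P :=: ortho_compl H)%MS].
Proof.
move=> rankH; have [Q [QQT1 /eqmxP eqQH]] := orthonormal_basis_of_rank rankH.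
have rankH' : \rank (ortho_compl H) = (n - k)%N by rewrite mxrank_ortho_compl rankH.
have [P [PPT1 /eqmxP eqPH']] := orthonormal_basis_of_rank rankH'.
exists Q, P; split => //; apply: orthonormal_col_mx QQT1 PPT1 _.
by apply: (mul_sub_kermx_tr (H := H)); rewrite ?eqQH ?eqPH'.
Qed.

Lemma orthogonal_mx_transfer H1 H2 : \rank H1 = \rank H2 ->
  exists2 U, orthogonal_mx U &
    (H2 *m U <= H1)%MS /\ (ortho_compl H2 *m U <= ortho_compl H1)%MS.
Proof.
move=> rankH12.
have [Q1 [P1 [B1 eqQ1 eqP1]]] := orthonormal_adapted_basis rankH12.
have [Q2 [P2 [B2 eqQ2 eqP2]]] := orthonormal_adapted_basis (erefl (\rank H2)).
have fullB2 : row_full (col_mx Q2 P2).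
  by rewrite -sub1mx -addsmxE (adds_eqmx eqQ2 eqP2) sub1mx row_full_addsmx_kermx_tr.
set U := (col_mx Q2 P2)^T *m col_mx Q1 P1.
have UUT1 : orthogonal_mx U.
  rewrite /orthogonal_mx trmx_mul trmxK mulmxA -(mulmxA _ (col_mx Q1 P1)) B1 mulmx1.
  exact: orthonormal_mulmx_trK.
have [Q2U P2U] : Q2 *m U = Q1 /\ P2 *m U = P1.
  by apply: eq_col_mx; rewrite -mul_col_mx mulmxA B2 mul1mx.
exists U => //; split.
  by rewrite -(eqmxMr U eqQ2) Q2U eqQ1.
by rewrite -(eqmxMr U eqP2) P2U eqP1.
Qed.

End OrthogonalMatrices.

Section Congruence.
Variables (R : realType) (n : nat).
Implicit Types (f g : 'rV[R]_n -> R) (H : 'M[R]_n).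

Lemma congruent_sym f g : congruent f g -> congruent g f.
Proof.
case=> U [eps [UUT1 [eps_pm1 fg]]]; exists U^T, eps.
split; first exact: orthogonal_mx_tr.
split=> // y; rewrite fg mulmx_orthogonalK // mulrA.
by case: eps_pm1 => ->; rewrite ?mulrNN !mul1r.
Qed.

Lemma eq_congruent_r f g g' : g =1 g' -> congruent f g -> congruent f g'.
Proof.
move=> gg' [U [eps [UUT1 [eps_pm1 fg]]]]; exists U, eps.
by do 2!split=> //; move=> x; rewrite -gg'.
Qed.

Lemma congruent_h4_rank H1 H2 : congruent (h4 H1) (h4 H2) ->
  (\rank H2 <= \rank H1)%N \/ (\rank H2 <= n - \rank H1)%N.
Proof.
case=> U [eps [UUT1 [eps_pm1 e]]].
have h4_H2U y : (y <= H2 *m U)%MS -> h4 H1 y = eps * sqnorm y ^+ 2.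
  case/submxP=> D ->; rewrite mulmxA sqnorm_mul_orthogonal //.
  rewrite -(h4_sub (submxMl D H2)) e mulrA.
  by case: eps_pm1 => ->; rewrite ?mulrNN !mul1r.
rewrite -(mxrank_mul_orthogonal H2 UUT1) -mxrank_ortho_compl.
case: eps_pm1 => eps_val; subst eps.
  have : forall y : 'rV_n, (y <= H2 *m U)%MS ->
      (y <= H1)%MS \/ (y <= ortho_compl H1)%MS.
    by move=> y /h4_H2U; rewrite mul1r => /h4_eq_sqnorm2P.
  by case/sub_union_submx => /mxrankS; [left | right].
left; have : (\rank (H2 *m U) + \rank (ortho_compl H1) <= n)%N.
  apply: mxrank_disjoint_le => y yH2U yH1'.
  by apply: (h4_eq_opp_sqnorm2 (or_intror yH1')); rewrite h4_H2U // mulN1r.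
rewrite mxrank_ortho_compl; have := rank_leq_col H1; lia.
Qed.

Lemma congruent_h4_eq_rank H1 H2 : \rank H1 = \rank H2 -> congruent (h4 H1) (h4 H2).
Proof.
case/orthogonal_mx_transfer=> U UUT1 [H2U H2'U]; exists U, 1.
by do 2!split=> //; [left | move=> x; rewrite mul1r; apply: h4_mul_orthogonal].
Qed.

End Congruence.

Theorem proposition1p2 (R : realType) (n : nat) (H1 H2 : 'M[R]_n) :
  congruent (h4 H1) (h4 H2) <->
  (\rank H1 = \rank H2 \/ \rank H1 = (n - \rank H2)%N).
Proof.
split=> [c12|].
  have c21 := congruent_sym c12.
  have c12' := eq_congruent_r (fun x => esym (h4_ortho_compl H2 x)) c12.
  have c21' := eq_congruent_r (fun x => esym (h4_ortho_compl H1 x)) c21.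
  have := congruent_h4_rank c12; have := congruent_h4_rank c12'.
  have := congruent_h4_rank c21; have := congruent_h4_rank c21'.
  rewrite !mxrank_ortho_compl; have := rank_leq_col H1; have := rank_leq_col H2.
  lia.
case=> rank12; first exact: congruent_h4_eq_rank.
apply: eq_congruent_r (h4_ortho_compl H2) _; apply: congruent_h4_eq_rank.
by rewrite mxrank_ortho_compl.
Qed.
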